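(* There is an absolute constant $c_0>0$ such that the following holds. Let $n\ge 2$, $\mathcal F\subseteq S_n$ with $|\mathcal F|=c\,n!$, $0<c<1$, $\eta=\min\{c,1-c\}$, $f=2\chi_{\mathcal F}-1$, $f_1$ its projection onto $U_1$, and $\epsilon=\mathbb E[(f-f_1)^2]$ with $0<\epsilon\le c_0\eta^7$. If $(X,Y)$ is a typical restriction, then either $g_1$ is $(3\epsilon^{1/7},19\epsilon^{1/7})$-almost close to $c-\tfrac12$ and $g_2+c-\tfrac12$ is $(4\epsilon^{1/7},24\epsilon^{1/7})$-almost Boolean, or the same holds with the roles of $g_1$ and $g_2$ interchanged (all on $T_{X,Y}$ with the uniform measure).
   Context: $S_n$ is the symmetric group on $[n]$; $T_{ij}$ is the indicator of $\{\pi:\pi(i)=j\}$; $U_1=\mathrm{span}\{T_{ij}\}$ with inner product $\langle f,g\rangle=\frac1{n!}\sum_\pi f(\pi)g(\pi)$. Let $a_{ij}=(n-1)\langle f,T_{ij}\rangle-\frac{n-2}{n}(2c-1)$. A restriction is $(X,Y)$ with $X,Y\subseteq[n]$, $|X|=|Y|$; $T_{X,Y}=\{\pi:\pi(X)=Y\}$ with uniform measure. For $\pi\in T_{X,Y}$, $g_1(\pi)=\sum_{i\in X}a_{i\pi(i)}$, $g_2(\pi)=\sum_{i\notin X}a_{i\pi(i)}$, $g=g_1+g_2$. A function $\phi$ is $(\delta,\epsilon)$-almost Boolean if $\Pr[||\phi|-1|\le\epsilon]\ge1-\delta$, and $(\delta,\epsilon)$-almost close to $C$ if $\Pr[|\phi-C|\le\epsilon]\ge1-\delta$.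 A restriction is typical if: (a) $g$ is $(\epsilon^{4/7},\epsilon^{1/7})$-almost Boolean; (b) $\mathbb E[g_1],\mathbb E[g_2]$ are within $\epsilon^{1/7}$ of $c-\frac12$; (c) $\mathbb E[(|g|-1)^2]\le\epsilon^{6/7}$. *)

From mathcomp Require Import all_boot all_fingroup.
From Stdlib Require Import Reals.

Set Implicit Arguments.
Unset Strict Implicit.
Unset Printing Implicit Defensive.

Local Open Scope R_scope.

Definition rsum (T : finType) (P : pred T) (F : T -> R) : R :=
  \big[Rplus/0]_(x | P x) F x.

Definition Sn (n : nat) := {perm 'I_n}.

Definition Rleb (x y : R) : bool := if Rle_dec x y then true else false.

Definition inner (n : nat) (f g : Sn n -> R) : R :=
  / INR (n`!) * rsum predT (fun pi => f pi * g pi).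

Definition ESn (n : nat) (f : Sn n -> R) : R := inner f (fun _ => 1).

Definition Tij (n : nat) (i j : 'I_n) (pi : Sn n) : R :=
  if pi i == j then 1 else 0.

Definition inU1 (n : nat) (h : Sn n -> R) : Prop :=
  exists b : 'I_n -> 'I_n -> R,
    forall pi, h pi = rsum predT (fun i => rsum predT (fun j => b i j * Tij i j pi)).

Definition is_proj_U1 (n : nat) (f h : Sn n -> R) : Prop :=
  inU1 h /\ forall i j : 'I_n, inner (fun pi => f pi - h pi) (Tij i j) = 0.

Definition dens (n : nat) (F : {set Sn n}) : R := INR #|F| / INR (n`!).

Definition fF (n : nat) (F : {set Sn n}) (pi : Sn n) : R :=
  2 * (if pi \in F then 1 else 0) - 1.

Definition acoef (n : nat) (F : {set Sn n}) (i j : 'I_n) : R :=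
  (INR n - 1) * inner (fF F) (Tij i j) - (INR n - 2) / INR n * (2 * dens F - 1).

Definition TXY (n : nat) (X Y : {set 'I_n}) : {set Sn n} :=
  [set pi : Sn n | (fun x : 'I_n => (pi : Sn n) x) @: X == Y].

Definition g1 (n : nat) (F : {set Sn n}) (X : {set 'I_n}) (pi : Sn n) : R :=
  rsum (fun i => i \in X) (fun i => acoef F i (pi i)).
Definition g2 (n : nat) (F : {set Sn n}) (X : {set 'I_n}) (pi : Sn n) : R :=
  rsum (fun i => i \notin X) (fun i => acoef F i (pi i)).
Definition gg (n : nat) (F : {set Sn n}) (X : {set 'I_n}) (pi : Sn n) : R :=
  g1 F X pi + g2 F X pi.

Definition PrT (n : nat) (X Y : {set 'I_n}) (P : pred (Sn n)) : R :=
  INR #|[set pi in TXY X Y | P pi]| / INR #|TXY X Y|.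
Definition ET (n : nat) (X Y : {set 'I_n}) (phi : Sn n -> R) : R :=
  rsum (fun pi => pi \in TXY X Y) phi / INR #|TXY X Y|.

Definition almost_boolean (n : nat) (X Y : {set 'I_n}) (phi : Sn n -> R)
  (delta eps : R) : Prop :=
  PrT X Y (fun pi => Rleb (Rabs (Rabs (phi pi) - 1)) eps) >= 1 - delta.

Definition almost_close (n : nat) (X Y : {set 'I_n}) (phi : Sn n -> R)
  (C delta eps : R) : Prop :=
  PrT X Y (fun pi => Rleb (Rabs (phi pi - C)) eps) >= 1 - delta.

Definition typical (n : nat) (F : {set Sn n}) (eps : R) (X Y : {set 'I_n}) : Prop :=
  #|X| = #|Y| /\
  almost_boolean X Y (gg F X) (Rpower eps (4/7)) (Rpower eps (1/7)) /\
  Rabs (ET X Y (g1 F X) - (dens F - 1/2)) <= Rpower eps (1/7) /\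
  Rabs (ET X Y (g2 F X) - (dens F - 1/2)) <= Rpower eps (1/7) /\
  ET X Y (fun pi => (Rabs (gg F X pi) - 1) ^ 2) <= Rpower eps (6/7).

From HB Require Import structures.
From mathcomp Require Import all_boot all_fingroup.
From Stdlib Require Import Reals Lra Lia Psatz.

Set Implicit Arguments.
Unset Strict Implicit.
Unset Printing Implicit Defensive.

Local Open Scope R_scope.

(* On T the function g1 only reads a permutation on X and g2 only
   off X, and T is a product of these two parts; so swapping the X-parts of
   two samples p, s of T is a measure-preserving involution of T x T, i.e.
   (g1, g2) is "exchangeable" and g1, g2 are independent.  The four-point
   inequality bounds (a-a')^2 (b-b')^2 by the Booleanity defects of a+b,
   a'+b', a+b', a'+b; summing it over T x T and using independence gives
       spread(g1) * spread(g2) <= (12 |T|^2 e^3)^2,    e = eps^(1/7),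
   where spread(A) = sum_{p,s} (A p - A s)^2.  Hence one of g1, g2 has small
   spread; Chebyshev (with its mean within e of c - 1/2) makes it almost
   constant, and Markov plus the triangle inequality make the other one,
   shifted by c - 1/2, almost Boolean. *)

Lemma Rplus_associative : associative Rplus.
Proof. by move=> a b c; rewrite Rplus_assoc. Qed.

HB.instance Definition _ :=
  Monoid.isComLaw.Build R 0 Rplus Rplus_associative Rplus_comm Rplus_0_l.

Notation sum_on T F := (rsum (fun x => x \in T) F).

Section RealSums.
Variable U : finType.

Lemma rsum_ext (P : pred U) (F G : U -> R) :
  (forall x, P x -> F x = G x) -> rsum P F = rsum P G.
Proof. by move=> FG; apply: eq_bigr. Qed.

Lemma rsum_le (P : pred U) (F G : U -> R) :
  (forall x, P x -> F x <= G x) -> rsum P F <= rsum P G.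
Proof.
move=> FG; apply: (big_ind2 (fun a b => a <= b)) => //; first exact: Rle_refl.
by move=> a b c d ? ?; apply: Rplus_le_compat.
Qed.

Lemma rsum_ge0 (P : pred U) (F : U -> R) :
  (forall x, P x -> 0 <= F x) -> 0 <= rsum P F.
Proof.
move=> F_ge0; have <- : rsum P (fun _ => 0) = 0 by apply: big1.
exact: rsum_le.
Qed.

Lemma rsumD (P : pred U) (F G : U -> R) :
  rsum P (fun x => F x + G x) = rsum P F + rsum P G.
Proof. exact: big_split. Qed.

Lemma rsumZ (P : pred U) (c : R) (F : U -> R) :
  rsum P (fun x => c * F x) = c * rsum P F.
Proof.
apply: (big_ind2 (fun a b => a = c * b)) => //; first by rewrite Rmult_0_r.
by move=> a b x y -> ->; rewrite Rmult_plus_distr_l.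
Qed.

Lemma rsumZr (P : pred U) (c : R) (F : U -> R) :
  rsum P (fun x => F x * c) = rsum P F * c.
Proof. by rewrite Rmult_comm -rsumZ; apply: rsum_ext => x _; apply: Rmult_comm. Qed.

Lemma rsum_exchange (P Q : pred U) (F : U -> U -> R) :
  rsum P (fun x => rsum Q (fun y => F x y)) = rsum Q (fun y => rsum P (fun x => F x y)).
Proof. exact: exchange_big. Qed.

Lemma rsum_const (A : {set U}) (c : R) : sum_on A (fun _ => c) = INR #|A| * c.
Proof.
have -> : INR #|A| = sum_on A (fun _ => 1).
  by rewrite -sum1_card (big_morph INR plus_INR (erefl (INR 0))).
by rewrite -rsumZr; apply: rsum_ext => x _; rewrite Rmult_1_l.
Qed.

End RealSums.

(* Two functions [A] and [B] on a finite set [T] are exchangeable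
   when swapping their [B]-values between two independent samples [p], [s]
   of [T] does not change the joint distribution of the four values.
   This is the only property of the pair (g1, g2) on T_{X,Y} the proof uses:
   it makes g1 and g2 independent under the uniform measure. *)
Definition exchangeable (U : finType) (T : {set U}) (A B : U -> R) : Prop :=
  forall H : R -> R -> R -> R -> R,
  sum_on T (fun p => sum_on T (fun s => H (A p) (B p) (A s) (B s))) =
  sum_on T (fun p => sum_on T (fun s => H (A p) (B s) (A s) (B p))).

Section RestrictionProduct.
Variables (n : nat) (X Y : {set 'I_n}).
Local Notation T := (TXY X Y).

Lemma TXY_in (p : Sn n) x : p \in T -> x \in X -> p x \in Y.
Proof. by rewrite inE => /eqP <- Hx; apply: imset_f. Qed.

Lemma TXY_out (p : Sn n) x : p \in T -> x \notin X -> p x \notin Y.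
Proof.
move=> Hp Hx; apply/negP; move: Hp; rewrite inE => /eqP <- /imsetP [y Hy].
by move/perm_inj => Exy; move: Hx; rewrite Exy Hy.
Qed.

Definition mixf (p s : Sn n) (x : 'I_n) : 'I_n := if x \in X then p x else s x.

Definition mix (p s : Sn n) : Sn n :=
  match injectiveP (mixf p s) with
  | ReflectT inj_ps => perm inj_ps
  | ReflectF _ => p
  end.

Lemma mixf_inj (p s : Sn n) : p \in T -> s \in T -> injective (mixf p s).
Proof.
move=> Hp Hs x y; rewrite /mixf.
case: (boolP (x \in X)) => Hx; case: (boolP (y \in X)) => Hy.
- exact: perm_inj.
- by move=> Exy; have := TXY_out Hs Hy; rewrite -Exy (TXY_in Hp Hx).
- by move=> Exy; have := TXY_out Hs Hx; rewrite Exy (TXY_in Hp Hy).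
- exact: perm_inj.
Qed.

Lemma mixE (p s : Sn n) x : p \in T -> s \in T -> mix p s x = mixf p s x.
Proof.
move=> Hp Hs; rewrite /mix; case: injectiveP => [inj_ps|not_inj].
  by rewrite permE.
by case: not_inj; exact: mixf_inj.
Qed.

Lemma mix_in (p s : Sn n) : p \in T -> s \in T -> mix p s \in T.
Proof.
move=> Hp Hs; rewrite inE; move: (Hp); rewrite inE => /eqP <-.
by apply/eqP; apply: eq_in_imset => x Hx; rewrite (mixE _ Hp Hs) /mixf Hx.
Qed.

Lemma mix_involutive (p s : Sn n) : p \in T -> s \in T -> mix (mix p s) (mix s p) = p.
Proof.
move=> Hp Hs; apply/permP => x.
rewrite (mixE _ (mix_in Hp Hs) (mix_in Hs Hp)) /mixf.
case: (boolP (x \in X)) => Hx.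
- by rewrite (mixE _ Hp Hs) /mixf Hx.
- by rewrite (mixE _ Hs Hp) /mixf (negbTE Hx).
Qed.

(* The swap (p, s) |-> (mix p s, mix s p) is an involution of T x T,
   hence a bijection, so it preserves double sums over T x T. *)
Definition swap (q : Sn n * Sn n) : Sn n * Sn n :=
  if (q.1 \in T) && (q.2 \in T) then (mix q.1 q.2, mix q.2 q.1) else q.

Lemma swap_in q : ((swap q).1 \in T) && ((swap q).2 \in T) = (q.1 \in T) && (q.2 \in T).
Proof.
case: q => p s; rewrite /swap /=.
case Hp: (p \in T); case Hs: (s \in T) => //=; rewrite ?Hp ?Hs //.
by rewrite (mix_in Hp Hs) (mix_in Hs Hp).
Qed.

Lemma swap_involutive : involutive swap.
Proof.
case=> p s; rewrite /swap /=.
case Hp: (p \in T); case Hs: (s \in T) => //=; rewrite ?Hp ?Hs //.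
by rewrite (mix_in Hp Hs) (mix_in Hs Hp) /= (mix_involutive Hp Hs) (mix_involutive Hs Hp).
Qed.

Lemma sum_swap (H : Sn n -> Sn n -> R) :
  sum_on T (fun p => sum_on T (fun s => H (mix p s) (mix s p))) =
  sum_on T (fun p => sum_on T (fun s => H p s)).
Proof.
rewrite /rsum !pair_big (reindex_inj (inv_inj swap_involutive)) /=.
apply: eq_big => q; first by rewrite swap_in.
rewrite swap_in => Hq; rewrite /swap Hq /=.
by case/andP: Hq => Hp Hs; rewrite (mix_involutive Hp Hs) (mix_involutive Hs Hp).
Qed.

Lemma g1_mix (F : {set Sn n}) (p s : Sn n) :
  p \in T -> s \in T -> g1 F X (mix p s) = g1 F X p.
Proof. by move=> Hp Hs; apply: rsum_ext => x Hx; rewrite (mixE _ Hp Hs) /mixf Hx. Qed.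

Lemma g2_mix (F : {set Sn n}) (p s : Sn n) :
  p \in T -> s \in T -> g2 F X (mix p s) = g2 F X s.
Proof.
by move=> Hp Hs; apply: rsum_ext => x Hx; rewrite (mixE _ Hp Hs) /mixf (negbTE Hx).
Qed.

Lemma TXY_exchangeable (F : {set Sn n}) : exchangeable T (g1 F X) (g2 F X).
Proof.
move=> H.
rewrite -(sum_swap (fun p s => H (g1 F X p) (g2 F X p) (g1 F X s) (g2 F X s))).
apply: rsum_ext => p Hp; apply: rsum_ext => s Hs.
by rewrite (g1_mix _ Hp Hs) (g2_mix _ Hp Hs) (g1_mix _ Hs Hp) (g2_mix _ Hs Hp).
Qed.

End RestrictionProduct.

(* Squared distance of |z| from 1: how far z is from being Boolean (+-1). *)
Definition bdev (z : R) : R := (Rabs z - 1) ^ 2.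

Lemma bdev_ge0 z : 0 <= bdev z.
Proof. exact: pow2_ge_0. Qed.

Lemma sign_plus_error z :
  exists s w, (s = 1 \/ s = -1) /\ z = s + w /\ Rabs w = Rabs (Rabs z - 1).
Proof.
case: (Rle_dec 0 z) => [z_ge0|z_lt0].
- exists 1, (z - 1); split; [by left | split; first by ring].
  by rewrite (Rabs_right z); lra.
- exists (-1), (z + 1); split; [by right | split; first by ring].
  rewrite (Rabs_left z); last lra.
  by rewrite -Rabs_Ropp; congr Rabs; ring.
Qed.

(* With z1 = a+b, z2 = a'+b', z3 = a+b', z4 = a'+b
   one has z1 + z2 = z3 + z4 and (a-a')(b-b') = z3 z4 - z1 z2; for signs
   the sum determines the product, so (a-a')(b-b') is controlled by the
   distances u_i of the z_i from {-1,1}. *)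
Lemma four_point a a' b b' :
  let u1 := Rabs (Rabs (a + b) - 1) in let u2 := Rabs (Rabs (a' + b') - 1) in
  let u3 := Rabs (Rabs (a + b') - 1) in let u4 := Rabs (Rabs (a' + b) - 1) in
  Rabs ((a - a') * (b - b')) <= 2 * (u1 + u2 + u3 + u4) + u1 * u2 + u3 * u4.
Proof.
move=> u1 u2 u3 u4; rewrite {}/u1 {}/u2 {}/u3 {}/u4.
have [s1 [w1 [S1 [E1 <-]]]] := sign_plus_error (a + b).
have [s2 [w2 [S2 [E2 <-]]]] := sign_plus_error (a' + b').
have [s3 [w3 [S3 [E3 <-]]]] := sign_plus_error (a + b').
have [s4 [w4 [S4 [E4 <-]]]] := sign_plus_error (a' + b).
have -> : (a - a') * (b - b') = (s3 + w3) * (s4 + w4) - (s1 + w1) * (s2 + w2).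
  by rewrite -E1 -E2 -E3 -E4; ring.
have sums : s1 + w1 + (s2 + w2) = s3 + w3 + (s4 + w4) by rewrite -E1 -E2 -E3 -E4; ring.
have abs_bounds x : - Rabs x <= x <= Rabs x.
  by split; [have := Rle_abs (- x); rewrite Rabs_Ropp; lra | exact: Rle_abs].
rewrite -!Rabs_mult; apply: Rabs_le.
have bw1 := abs_bounds w1; have bw2 := abs_bounds w2; have bw3 := abs_bounds w3.
have bw4 := abs_bounds w4; have bw12 := abs_bounds (w1 * w2).
have bw34 := abs_bounds (w3 * w4).
by case: S1 => ?; case: S2 => ?; case: S3 => ?; case: S4 => ?; subst; nra.
Qed.

Lemma sqr_sum6 x1 x2 x3 x4 x5 x6 :
  (x1 + x2 + x3 + x4 + x5 + x6) ^ 2 <= 6 * (x1^2 + x2^2 + x3^2 + x4^2 + x5^2 + x6^2).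
Proof.
have sq_ge0 y : 0 <= y ^ 2 by apply: pow2_ge_0.
have := sq_ge0 (x1-x2); have := sq_ge0 (x1-x3); have := sq_ge0 (x1-x4).
have := sq_ge0 (x1-x5); have := sq_ge0 (x1-x6); have := sq_ge0 (x2-x3).
have := sq_ge0 (x2-x4); have := sq_ge0 (x2-x5); have := sq_ge0 (x2-x6).
have := sq_ge0 (x3-x4); have := sq_ge0 (x3-x5); have := sq_ge0 (x3-x6).
have := sq_ge0 (x4-x5); have := sq_ge0 (x4-x6); have := sq_ge0 (x5-x6).
lra.
Qed.

Lemma four_point_sq a a' b b' :
  (a - a') ^ 2 * (b - b') ^ 2 <=
  24 * (bdev (a + b) + bdev (a' + b') + bdev (a + b') + bdev (a' + b) +
        bdev (a + b) * bdev (a' + b') + bdev (a + b') * bdev (a' + b)).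
Proof.
have := four_point a a' b b'; rewrite /bdev.
rewrite -Rpow_mult_distr -(pow2_abs ((a - a') * (b - b'))).
rewrite -(pow2_abs (Rabs (a + b) - 1)) -(pow2_abs (Rabs (a' + b') - 1)).
rewrite -(pow2_abs (Rabs (a + b') - 1)) -(pow2_abs (Rabs (a' + b) - 1)).
set u1 := Rabs (Rabs (a + b) - 1); set u2 := Rabs (Rabs (a' + b') - 1).
set u3 := Rabs (Rabs (a + b') - 1); set u4 := Rabs (Rabs (a' + b) - 1).
set P := Rabs ((a - a') * (b - b')) => P_le.
have P_ge0 : 0 <= P by apply: Rabs_pos.
have : 0 <= u1 /\ 0 <= u2 /\ 0 <= u3 /\ 0 <= u4 by split; [|split; [|split]]; apply: Rabs_pos.
move=> [u1_ge0 [u2_ge0 [u3_ge0 u4_ge0]]].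
have := sqr_sum6 (2 * u1) (2 * u2) (2 * u3) (2 * u4) (u1 * u2) (u3 * u4).
have : P ^ 2 <= (2 * u1 + 2 * u2 + 2 * u3 + 2 * u4 + u1 * u2 + u3 * u4) ^ 2.
  by apply: pow_incr; lra.
nra.
Qed.

Definition mean (U : finType) (T : {set U}) (A : U -> R) : R := sum_on T A / INR #|T|.

Definition spread (U : finType) (T : {set U}) (A : U -> R) : R :=
  sum_on T (fun p => sum_on T (fun s => (A p - A s) ^ 2)).

Lemma spread_variance (U : finType) (T : {set U}) (A : U -> R) :
  0 < INR #|T| ->
  spread T A = 2 * INR #|T| * sum_on T (fun p => (A p - mean T A) ^ 2).
Proof.
move=> N_gt0; set m := mean T A; set V := sum_on T (fun p => (A p - m) ^ 2).
have centered : sum_on T (fun s => A s - m) = 0.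
  rewrite (rsum_ext (G := fun s => A s + - m)) // rsumD rsum_const /m /mean.
  by field; lra.
transitivity (sum_on T (fun p => INR #|T| * (A p - m) ^ 2 + V)).
  apply: rsum_ext => p _.
  rewrite (rsum_ext (G := fun s => (A p - m) ^ 2 + (-2 * (A p - m) * (A s - m) + (A s - m) ^ 2))).
    by rewrite rsumD rsum_const rsumD rsumZ centered /V; ring.
  by move=> s _; ring.
by rewrite rsumD rsumZ rsum_const -/V; ring.
Qed.

Section ExchangeableSpread.
Variables (U : finType) (T : {set U}) (A B : U -> R).
Hypothesis exchAB : exchangeable T A B.
Local Notation N := (INR #|T|).
Local Notation R0 := (sum_on T (fun p => bdev (A p + B p))).

Lemma exchangeable_split (Psi : R -> R -> R) :
  sum_on T (fun p => sum_on T (fun s => Psi (A p) (B s))) =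
  N * sum_on T (fun p => Psi (A p) (B p)).
Proof.
rewrite -(exchAB (fun a b a' b' => Psi a b)) -rsumZ.
by apply: rsum_ext => p _; rewrite rsum_const.
Qed.

Lemma exchangeable_cross :
  sum_on T (fun p => sum_on T (fun s => bdev (A p + B s) * bdev (A s + B p))) = R0 * R0.
Proof.
rewrite -(exchAB (fun a b a' b' => bdev (a + b) * bdev (a' + b'))) -rsumZr.
by apply: rsum_ext => p _; rewrite rsumZ.
Qed.

Lemma spread_product :
  N ^ 2 * sum_on T (fun p => sum_on T (fun s => (A p - A s) ^ 2 * (B p - B s) ^ 2)) =
  spread T A * spread T B.
Proof.
have pair_in_p : N * sum_on T (fun p => sum_on T (fun s => (A p - A s) ^ 2 * (B p - B s) ^ 2)) =
    sum_on T (fun s => sum_on T (fun p => sum_on T (fun p' =>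
      (A p - A s) ^ 2 * (B p' - B s) ^ 2))).
  rewrite rsum_exchange -rsumZ; apply: rsum_ext => s _.
  by rewrite (exchangeable_split (fun a b => (a - A s) ^ 2 * (b - B s) ^ 2)).
have pair_in_s : forall p p', N * sum_on T (fun s => (A p - A s) ^ 2 * (B p' - B s) ^ 2) =
    sum_on T (fun s => sum_on T (fun s' => (A p - A s) ^ 2 * (B p' - B s') ^ 2)).
  by move=> p p'; rewrite (exchangeable_split (fun a b => (A p - a) ^ 2 * (B p' - b) ^ 2)).
rewrite [N ^ 2]/= Rmult_1_r Rmult_assoc pair_in_p.
transitivity (sum_on T (fun p => sum_on T (fun p' =>
    N * sum_on T (fun s => (A p - A s) ^ 2 * (B p' - B s) ^ 2)))).
  rewrite rsum_exchange -rsumZ; apply: rsum_ext => p _.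
  by rewrite rsum_exchange -rsumZ.
rewrite /spread -rsumZr; apply: rsum_ext => p _.
rewrite [RHS]Rmult_comm -rsumZr; apply: rsum_ext => p' _.
rewrite pair_in_s [RHS]Rmult_comm -rsumZr; apply: rsum_ext => s _.
by rewrite -rsumZ.
Qed.

(* Summing the four-point inequality over T x T. *)
Lemma joint_spread_bound :
  sum_on T (fun p => sum_on T (fun s => (A p - A s) ^ 2 * (B p - B s) ^ 2)) <=
  24 * (4 * N * R0 + 2 * R0 ^ 2).
Proof.
apply: Rle_trans.
  apply: (rsum_le (G := fun p => sum_on T (fun s =>
    24 * bdev (A p + B p) + 24 * bdev (A s + B s) + 24 * bdev (A p + B s) +
    24 * bdev (A s + B p) + 24 * (bdev (A p + B p) * bdev (A s + B s)) +
    24 * (bdev (A p + B s) * bdev (A s + B p))))) => p _.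
  apply: rsum_le => s _; have := four_point_sq (A p) (A s) (B p) (B s); lra.
apply: Req_le.
have diag_p : sum_on T (fun p => sum_on T (fun s => bdev (A p + B p))) = N * R0.
  by rewrite -rsumZ; apply: rsum_ext => p _; rewrite rsum_const.
have diag_s : sum_on T (fun p => sum_on T (fun s => bdev (A s + B s))) = N * R0.
  by rewrite rsum_const.
have off_ps : sum_on T (fun p => sum_on T (fun s => bdev (A p + B s))) = N * R0.
  exact: (exchangeable_split (fun a b => bdev (a + b))).
have off_sp : sum_on T (fun p => sum_on T (fun s => bdev (A s + B p))) = N * R0.
  by rewrite rsum_exchange; exact: (exchangeable_split (fun a b => bdev (a + b))).
have diag_prod : sum_on T (fun p => sum_on T (fun s => bdev (A p + B p) * bdev (A s + B s)))
    = R0 * R0.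
  by rewrite -rsumZr; apply: rsum_ext => p _; rewrite rsumZ.
rewrite (rsum_ext (G := fun p => sum_on T (fun s => 24 * bdev (A p + B p)) +
    sum_on T (fun s => 24 * bdev (A s + B s)) + sum_on T (fun s => 24 * bdev (A p + B s)) +
    sum_on T (fun s => 24 * bdev (A s + B p)) +
    sum_on T (fun s => 24 * (bdev (A p + B p) * bdev (A s + B s))) +
    sum_on T (fun s => 24 * (bdev (A p + B s) * bdev (A s + B p))))); last first.
  by move=> p _; rewrite !rsumD.
rewrite !rsumD.
have double_scale (G : U -> U -> R) : sum_on T (fun p => sum_on T (fun s => 24 * G p s)) =
    24 * sum_on T (fun p => sum_on T (fun s => G p s)).
  by rewrite -rsumZ; apply: rsum_ext => p _; rewrite rsumZ.
rewrite !double_scale diag_p diag_s off_ps off_sp diag_prod exchangeable_cross; ring.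
Qed.

Lemma exchangeable_small_spread e :
  0 < N -> 0 < e <= 1 -> R0 <= N * e ^ 6 ->
  spread T A <= 12 * N ^ 2 * e ^ 3 \/ spread T B <= 12 * N ^ 2 * e ^ 3.
Proof.
move=> N_gt0 e_bnd R0_le.
have R0_ge0 : 0 <= R0 by apply: rsum_ge0 => p _; exact: bdev_ge0.
have spread_ge0 (G : U -> R) : 0 <= spread T G.
  by apply: rsum_ge0 => p _; apply: rsum_ge0 => s _; exact: pow2_ge_0.
have e6_le1 : e ^ 6 <= 1 by rewrite -(pow1 6); apply: pow_incr; lra.
have e3_gt0 : 0 < e ^ 3 by apply: pow_lt; lra.
have R0_sq : R0 ^ 2 <= (N * e ^ 6) ^ 2 by apply: pow_incr; lra.
have joint_le : sum_on T (fun p => sum_on T (fun s => (A p - A s) ^ 2 * (B p - B s) ^ 2))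
    <= 144 * N ^ 2 * e ^ 6.
  apply: Rle_trans joint_spread_bound _.
  have : 0 < N * e ^ 6 by apply: Rmult_lt_0_compat => //; apply: pow_lt; lra.
  nra.
have prod_le : spread T A * spread T B <= (12 * N ^ 2 * e ^ 3) ^ 2.
  rewrite -spread_product.
  have -> : (12 * N ^ 2 * e ^ 3) ^ 2 = N ^ 2 * (144 * N ^ 2 * e ^ 6) by ring.
  by apply: Rmult_le_compat_l => //; apply: pow2_ge_0.
have := spread_ge0 A; have := spread_ge0 B.
have : 0 < 12 * N ^ 2 * e ^ 3 by apply: Rmult_lt_0_compat => //; nra.
case: (Rle_dec (spread T A) (12 * N ^ 2 * e ^ 3)) => [|gtA]; [by left | right; nra].
Qed.

End ExchangeableSpread.

Definition ind (b : bool) : R := if b then 1 else 0.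

Definition nbad (U : finType) (T : {set U}) (P : pred U) : R := sum_on T (fun x => ind (~~ P x)).

Definition prob (U : finType) (T : {set U}) (P : pred U) : R :=
  INR #|[set x in T | P x]| / INR #|T|.

Lemma RlebP x y : reflect (x <= y) (Rleb x y).
Proof. by rewrite /Rleb; case: Rle_dec => H; constructor. Qed.

Section Counting.
Variables (U : finType) (T : {set U}).
Local Notation N := (INR #|T|).

Lemma card_sum_ind (P : pred U) : INR #|[set x in T | P x]| = sum_on T (fun x => ind (P x)).
Proof.
rewrite -[INR _]Rmult_1_r -rsum_const /rsum.
rewrite (eq_bigl (fun x => (x \in T) && P x)) ?big_mkcondr // => x.
by rewrite inE.
Qed.

Lemma nbad_ge0 (P : pred U) : 0 <= nbad T P.
Proof. by apply: rsum_ge0 => x _; rewrite /ind; case: (~~ P x); lra. Qed.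

Lemma prob_of_nbad (P : pred U) d : 0 < N -> nbad T P <= N * d -> prob T P >= 1 - d.
Proof.
move=> N_gt0 bad_le.
have split_N : N = INR #|[set x in T | P x]| + nbad T P.
  rewrite card_sum_ind -rsumD -[N]Rmult_1_r -rsum_const.
  by apply: rsum_ext => x _; rewrite /ind; case: (P x) => /=; ring.
apply: Rle_ge; apply: (Rmult_le_reg_r N) => //.
by rewrite /prob /Rdiv Rmult_assoc Rinv_l; lra.
Qed.

Lemma nbad_union (P Q S : pred U) :
  (forall x, x \in T -> P x -> Q x -> S x) -> nbad T S <= nbad T P + nbad T Q.
Proof.
move=> PQS; rewrite -rsumD; apply: rsum_le => x Tx; rewrite /ind.
have [Px|_] /= := boolP (P x); last by case: (~~ S x); case: (~~ Q x); lra.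
have [Qx|_] /= := boolP (Q x); last by case: (~~ S x); lra.
by rewrite (PQS x Tx Px Qx) /=; lra.
Qed.

Lemma markov_nbad (P : pred U) (phi : U -> R) t :
  (forall x, x \in T -> 0 <= phi x) -> (forall x, x \in T -> ~~ P x -> t <= phi x) ->
  t * nbad T P <= sum_on T phi.
Proof.
move=> phi_ge0 phi_big; rewrite -rsumZ; apply: rsum_le => x Tx; rewrite /ind.
case: (boolP (~~ P x)) => notP; rewrite ?Rmult_1_r ?Rmult_0_r; [exact: phi_big | exact: phi_ge0].
Qed.

Lemma nbad_far_from (A : U -> R) C e :
  0 < N -> 0 < e -> Rabs (mean T A - C) <= e -> spread T A <= 12 * N ^ 2 * e ^ 3 ->
  nbad T (fun x => Rleb (Rabs (A x - C)) (19 * e)) <= N * e / 54.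
Proof.
move=> N_gt0 e_gt0 mean_near spread_le.
have var_le : sum_on T (fun p => (A p - mean T A) ^ 2) <= 6 * N * e ^ 3.
  rewrite spread_variance // in spread_le.
  have : 0 < N ^ 2 * e ^ 3 by apply: Rmult_lt_0_compat; apply: pow_lt; lra.
  nra.
have far_sq : forall x, x \in T -> ~~ Rleb (Rabs (A x - C)) (19 * e) ->
    324 * e ^ 2 <= (A x - mean T A) ^ 2.
  move=> x _ /negP far; rewrite -(pow2_abs (A x - mean T A)).
  have : 18 * e <= Rabs (A x - mean T A).
    have {}far : ~ Rabs (A x - C) <= 19 * e by move=> ?; apply: far; apply/RlebP.
    by move: mean_near far; rewrite /Rabs; repeat case: Rcase_abs; lra.
  nra.
have := markov_nbad (fun x _ => pow2_ge_0 _) far_sq.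
have := nbad_ge0 (fun x => Rleb (Rabs (A x - C)) (19 * e)).
have : 0 < e ^ 2 by apply: pow_lt.
nra.
Qed.

Lemma nbad_not_boolean (Z : U -> R) e :
  0 < e -> sum_on T (fun p => bdev (Z p)) <= N * e ^ 6 ->
  nbad T (fun x => Rleb (Rabs (Rabs (Z x) - 1)) e) <= N * e ^ 4.
Proof.
move=> e_gt0 defect_le.
have far_sq : forall x, x \in T -> ~~ Rleb (Rabs (Rabs (Z x) - 1)) e -> e ^ 2 <= bdev (Z x).
  move=> x _ /negP far; rewrite /bdev -(pow2_abs (Rabs (Z x) - 1)).
  have : e < Rabs (Rabs (Z x) - 1) by apply: Rnot_le_lt => ?; apply: far; apply/RlebP.
  nra.
have := markov_nbad (fun x _ => bdev_ge0 _) far_sq.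
have := nbad_ge0 (fun x => Rleb (Rabs (Rabs (Z x) - 1)) e).
have : 0 < e ^ 2 by apply: pow_lt.
have e6 : e ^ 6 = e ^ 2 * e ^ 4 by ring.
rewrite e6 in defect_le; nra.
Qed.

End Counting.

Definition close_and_boolean (U : finType) (T : {set U}) (A B : U -> R) (C e : R) : Prop :=
  prob T (fun x => Rleb (Rabs (A x - C)) (19 * e)) >= 1 - 3 * e /\
  prob T (fun x => Rleb (Rabs (Rabs (B x + C) - 1)) (24 * e)) >= 1 - 4 * e.

Lemma abs_dev_triangle x y : Rabs (Rabs x - 1) <= Rabs (Rabs y - 1) + Rabs (x - y).
Proof. by rewrite /Rabs; repeat case: Rcase_abs; lra. Qed.

Section Dichotomy.
Variables (U : finType) (T : {set U}).
Local Notation N := (INR #|T|).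

(* If A has small spread and mean near C while A + B is almost Boolean,
   then A is almost surely near C, hence B + C = (A + B) - (A - C) is
   almost Boolean. *)
Lemma concentration (A B : U -> R) C e :
  0 < N -> 0 < e <= 1 -> Rabs (mean T A - C) <= e -> spread T A <= 12 * N ^ 2 * e ^ 3 ->
  sum_on T (fun p => bdev (A p + B p)) <= N * e ^ 6 ->
  close_and_boolean T A B C e.
Proof.
move=> N_gt0 [e_gt0 e_le1] mean_near spread_le defect_le.
have far := nbad_far_from N_gt0 e_gt0 mean_near spread_le.
have nonbool := nbad_not_boolean e_gt0 defect_le.
have e4_le : e ^ 4 <= e.
  have : e ^ 3 <= 1 by rewrite -(pow1 3); apply: pow_incr; lra.
  have -> : e ^ 4 = e * e ^ 3 by ring.
  nra.
have bad_B : nbad T (fun x => Rleb (Rabs (Rabs (B x + C) - 1)) (24 * e)) <=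
    nbad T (fun x => Rleb (Rabs (A x - C)) (19 * e)) +
    nbad T (fun x => Rleb (Rabs (Rabs (A x + B x) - 1)) e).
  apply: nbad_union => x _ /RlebP near /RlebP almost_bool; apply/RlebP.
  have := abs_dev_triangle (B x + C) (A x + B x).
  have -> : B x + C - (A x + B x) = - (A x - C) by ring.
  by rewrite Rabs_Ropp; lra.
by split; apply: prob_of_nbad => //; nra.
Qed.

Lemma exchangeable_dichotomy (A B : U -> R) C e :
  exchangeable T A B -> 0 < N -> 0 < e <= 1 ->
  Rabs (mean T A - C) <= e -> Rabs (mean T B - C) <= e ->
  sum_on T (fun p => bdev (A p + B p)) <= N * e ^ 6 ->
  close_and_boolean T A B C e \/ close_and_boolean T B A C e.
Proof.
move=> exchAB N_gt0 e_bnd meanA meanB defect_le.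
have [spreadA|spreadB] := exchangeable_small_spread exchAB N_gt0 e_bnd defect_le.
  by left; apply: concentration.
right; apply: concentration => //.
by rewrite (rsum_ext (G := fun p => bdev (A p + B p))) // => x _; rewrite Rplus_comm.
Qed.

End Dichotomy.

Lemma Rpower_sevenths eps k : 0 < eps -> Rpower eps (INR k / 7) = Rpower eps (1 / 7) ^ k.
Proof.
move=> eps_gt0; rewrite -Rpower_pow; last by rewrite /Rpower; apply: exp_pos.
by rewrite Rpower_mult; congr Rpower; field.
Qed.

Lemma seventh_root_bounds eps :
  0 < eps < 1 ->
  0 < Rpower eps (1 / 7) < 1 /\
  Rpower eps (4 / 7) = Rpower eps (1 / 7) ^ 4 /\ Rpower eps (6 / 7) = Rpower eps (1 / 7) ^ 6.
Proof.
move=> [eps_gt0 eps_lt1]; set e := Rpower eps (1 / 7).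
have e_gt0 : 0 < e by apply: exp_pos.
have e7 : e ^ 7 = eps.
  by rewrite -(Rpower_sevenths 7 eps_gt0) (_ : INR 7 / 7 = 1) ?Rpower_1 //=; field.
split; first split=> //.
  by case: (Rlt_dec e 1) => // e_ge1; have := pow_R1_Rle e 7; lra.
by split; rewrite -Rpower_sevenths //; congr Rpower; rewrite /=; field.
Qed.

(* A typical restriction with 0 < eps < 1 provides, with e = eps^(1/7):
   a nonempty T_{X,Y} (the Booleanity probability 1 - e^4 is positive),
   means of g1, g2 within e of C, and a total Booleanity defect of g at
   most |T_{X,Y}| e^6. *)
Lemma typical_consequences n (F : {set Sn n}) eps (X Y : {set 'I_n}) :
  0 < eps < 1 -> typical F eps X Y ->
  let e := Rpower eps (1 / 7) in
  0 < INR #|TXY X Y| /\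
  Rabs (mean (TXY X Y) (g1 F X) - (dens F - 1 / 2)) <= e /\
  Rabs (mean (TXY X Y) (g2 F X) - (dens F - 1 / 2)) <= e /\
  sum_on (TXY X Y) (fun p => bdev (g1 F X p + g2 F X p)) <= INR #|TXY X Y| * e ^ 6.
Proof.
move=> eps_bnd [_ [almost_bool [mean1 [mean2 defect]]]] e.
have [[e_gt0 e_lt1] [e4 e6]] := seventh_root_bounds eps_bnd.
rewrite -/e in e_gt0 e_lt1 e4 e6 mean1 mean2.
rewrite e4 in almost_bool; rewrite e6 in defect.
have [_ e4_lt1] : 0 <= e ^ 4 < 1 by apply: pow_lt_1_compat; [lra | lia].
have N_gt0 : 0 < INR #|TXY X Y|.
  case: (pos_INR #|TXY X Y|) => // N0.
  by move: almost_bool; rewrite /almost_boolean /PrT -N0 /Rdiv Rinv_0 Rmult_0_r; lra.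
split=> //; split=> //; split=> //.
move: defect; rewrite /ET /gg.
set S := rsum _ _ => defect.
have -> : S = S / INR #|TXY X Y| * INR #|TXY X Y| by field; lra.
by rewrite Rmult_comm; apply: Rmult_le_compat_l; lra.
Qed.

Theorem lemma2p7 :
  exists c0 : R, 0 < c0 /\
  forall (n : nat), is_true (leq 2 n) ->
  forall (F : {set Sn n}),
  0 < dens F < 1 ->
  forall f1 : Sn n -> R, is_proj_U1 (fF F) f1 ->
  0 < ESn (fun pi => (fF F pi - f1 pi) ^ 2) <=
      c0 * (Rmin (dens F) (1 - dens F)) ^ 7 ->
  forall X Y : {set 'I_n},
  typical F (ESn (fun pi => (fF F pi - f1 pi) ^ 2)) X Y ->
  let e := Rpower (ESn (fun pi => (fF F pi - f1 pi) ^ 2)) (1/7) in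
  let C := dens F - 1/2 in
  (almost_close X Y (g1 F X) C (3 * e) (19 * e) /\
   almost_boolean X Y (fun pi => g2 F X pi + C) (4 * e) (24 * e))
  \/
  (almost_close X Y (g2 F X) C (3 * e) (19 * e) /\
   almost_boolean X Y (fun pi => g1 F X pi + C) (4 * e) (24 * e)).
Proof.
exists (1 / 2); split; first lra.
move=> n _ F dens_bnd f1 _ eps_bnd X Y typ e C.
have eta7_le1 : Rmin (dens F) (1 - dens F) ^ 7 <= 1.
  rewrite -(pow1 7); apply: pow_incr; rewrite /Rmin; case: Rle_dec; lra.
have eps_lt1 : 0 < ESn (fun pi => (fF F pi - f1 pi) ^ 2) < 1 by nra.
have [[e_gt0 e_lt1] _] := seventh_root_bounds eps_lt1.
have [N_gt0 [mean1 [mean2 defect]]] := typical_consequences eps_lt1 typ.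
exact: (exchangeable_dichotomy (TXY_exchangeable X Y F) N_gt0 (conj e_gt0 (Rlt_le _ _ e_lt1))
  mean1 mean2 defect).
Qed.
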